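(* Let $1<p<\infty$, $N\ge1$, $0\le R_1<R_2<\infty$, and let $f$ satisfy: $(f_{\mathrm{reg}})$ $f\in C([0,\infty))\cap C^1((0,\infty))$; $(f_{\mathrm{eq}})$ $f(0)=f(1)=0$, $f(s)<0$ for $0<s<1$, $f(s)>0$ for $s>1$; $(f_0)$ there exists $C_0\in[0,\infty)$ with $\lim_{s\to0^+}f(s)/s^{p-1}=-C_0$; $(f_1)$ there exists $C_1\in[0,\infty]$ with $\lim_{s\to1}\frac{f(s)}{|s-1|^{p-2}(s-1)}=C_1$. Define $\hat f(s)=f(s)$ for $s\ge0$ and $\hat f(s)=0$ for $s<0$, and $\varphi_p(s)=|s|^{p-2}s$. Let $u$ be a solution of $$-\big(r^{N-1}\varphi_p(u')\big)'=r^{N-1}\hat f(u)\ \text{in }(R_1,R_2),\qquad u'(R_1)=u'(R_2)=0.$$ Then either $u\equiv -C$ for some constant $C\ge0$, or $u(r)>0$ for every $r\in[R_1,R_2]$.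
   Context: A solution means a function $u$ such that $u$ and $r^{N-1}\varphi_p(u')$ belong to $C^1([R_1,R_2])$ and the equation holds pointwise, together with the boundary conditions. *)

From Stdlib Require Import Reals.
From Coquelicot Require Import Coquelicot.
Open Scope R_scope.

(* phi_p(s) = |s|^(p-2) s, with phi_p(0) = 0 (the continuous extension, p > 1). *)
Definition phi_p (p s : R) : R :=
  if Req_EM_T s 0 then 0 else Rpower (Rabs s) (p - 2) * s.

Definition fhat (f : R -> R) (s : R) : R :=
  if Rle_dec 0 s then f s else 0.

Definition cont_within (D : R -> Prop) (g : R -> R) (x : R) : Prop :=
  filterlim g (within D (locally x)) (locally (g x)).

Definition f_reg (f : R -> R) : Prop :=
  (forall x, 0 <= x -> cont_within (fun y => 0 <= y) f x) /\
  (forall x, 0 < x -> ex_derive f x /\ continuous (Derive f) x).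

Definition deriv_within_ab (a b : R) (g : R -> R) (x dg : R) : Prop :=
  filterlim (fun y => (g y - g x) / (y - x))
    (within (fun y => a <= y <= b /\ y <> x) (locally x)) (locally dg).

Definition C1_on (a b : R) (g dg : R -> R) : Prop :=
  forall x, a <= x <= b ->
    deriv_within_ab a b g x (dg x) /\ cont_within (fun y => a <= y <= b) dg x.

From Stdlib Require Import Reals Lra.
From Coquelicot Require Import Coquelicot.
Open Scope R_scope.

(* Let m = u(r0) be the minimum of u.  If m > 0 we are done; otherwise v = u - m
   is nonnegative and vanishes at r0, and we show v = 0.  Since fhat f (u) = 0
   where u <= 0 and 0 < u <= v elsewhere, (f_0) gives |w'| <= K r^(N-1) v^(p-1)
   for w = r^(N-1) phi_p(u').  On an interval of length h where v has a zero and
   w has a zero, let M = max v > 0; two mean value estimates give M <= |u'(xi)| h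
   and xi^(N-1) |u'(xi)|^(p-1) = |w(xi)| <= h max |w'|, hence
   (M/h)^(p-1) <= 2^(N-1) K M^(p-1) h, impossible once 2^(N-1) K h^p < 1.  Every
   zero of v is a minimum of u, where w vanishes (by Fermat's rule or the boundary
   conditions), so the zero set of v spreads by steps of fixed length over
   [R1, R2]: u = m everywhere, and C = -m. *)

Lemma deriv_within_ab_epsilon a b g x d : deriv_within_ab a b g x d ->
  forall eps, 0 < eps -> exists delta, 0 < delta /\
    forall y, a <= y <= b -> y <> x -> Rabs (y - x) < delta ->
      Rabs ((g y - g x) / (y - x) - d) < eps.
Proof.
intros H eps Heps.
destruct (proj1 (filterlim_locally _ _) H (mkposreal eps Heps)) as [delta Hdelta].
exists delta; split; [apply cond_pos|].
intros y Hy Hyx Hd. apply (Hdelta y); [exact Hd | split; assumption].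
Qed.

Lemma deriv_within_ab_derivable a b g x d : a < x < b ->
  deriv_within_ab a b g x d -> derivable_pt_lim g x d.
Proof.
intros Hx H eps Heps.
destruct (deriv_within_ab_epsilon a b g x d H eps Heps) as [delta [Hdelta Hq]].
assert (Hpos : 0 < Rmin delta (Rmin (x - a) (b - x))).
{ apply Rmin_pos; [lra | apply Rmin_pos; lra]. }
exists (mkposreal _ Hpos); simpl; intros h Hh0 Hh.
pose proof (Rmin_l delta (Rmin (x - a) (b - x))).
pose proof (Rmin_r delta (Rmin (x - a) (b - x))).
pose proof (Rmin_l (x - a) (b - x)). pose proof (Rmin_r (x - a) (b - x)).
pose proof (Rle_abs h). pose proof (Rle_abs (- h)). rewrite Rabs_Ropp in *.
specialize (Hq (x + h) ltac:(lra) ltac:(lra)).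
replace (x + h - x) with h in Hq by ring.
apply Hq; lra.
Qed.

Lemma deriv_within_ab_continuous a b g x d : deriv_within_ab a b g x d ->
  forall eps, 0 < eps -> exists delta, 0 < delta /\
    forall y, a <= y <= b -> Rabs (y - x) < delta -> Rabs (g y - g x) < eps.
Proof.
intros H eps Heps.
destruct (deriv_within_ab_epsilon a b g x d H 1 Rlt_0_1) as [delta [Hdelta Hq]].
set (L := Rabs d + 1).
assert (HL : 0 < L) by (unfold L; pose proof (Rabs_pos d); lra).
exists (Rmin delta (eps / L)); split.
{ apply Rmin_pos; [lra | apply Rdiv_lt_0_compat; lra]. }
intros y Hy Hyx.
pose proof (Rmin_l delta (eps / L)). pose proof (Rmin_r delta (eps / L)).
destruct (Req_dec y x) as [-> | Hne].
{ rewrite Rminus_diag, Rabs_R0; lra. }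
specialize (Hq y Hy Hne ltac:(lra)).
set (q := (g y - g x) / (y - x)) in Hq.
assert (Hgq : g y - g x = q * (y - x)) by (unfold q; field; lra).
assert (Hqbound : Rabs q <= L).
{ pose proof (Rabs_triang_inv q d). unfold L; lra. }
assert (Hyx' : Rabs (y - x) * L < eps).
{ apply (Rmult_lt_reg_r (/ L)); [apply Rinv_0_lt_compat; lra|].
  rewrite Rmult_assoc, Rinv_r, Rmult_1_r by lra. unfold Rdiv in *; lra. }
rewrite Hgq, Rabs_mult.
pose proof (Rabs_pos (y - x)). pose proof (Rabs_pos q). nra.
Qed.

Lemma deriv_within_ab_min a b g x d : a < x < b -> deriv_within_ab a b g x d ->
  (forall t, a <= t <= b -> g x <= g t) -> d = 0.
Proof.
intros Hx H Hmin.
exact (deriv_minimum g a b x (exist _ d (deriv_within_ab_derivable a b g x d Hx H))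
  (proj1 Hx) (proj2 Hx) (fun t Ht1 Ht2 => Hmin t ltac:(lra))).
Qed.

(* Composing with [clamp a b] extends a function continuous on [a, b] to one
   continuous on R, as the Stdlib mean value and extreme value theorems require. *)
Definition clamp a b x := Rmax a (Rmin x b).

Lemma clamp_in a b x : a <= b -> a <= clamp a b x <= b.
Proof. intros. unfold clamp, Rmax, Rmin. repeat destruct Rle_dec; lra. Qed.

Lemma clamp_id a b x : a <= x <= b -> clamp a b x = x.
Proof. intros. unfold clamp, Rmax, Rmin. repeat destruct Rle_dec; lra. Qed.

Lemma clamp_lipschitz a b x y : a <= b -> Rabs (clamp a b y - clamp a b x) <= Rabs (y - x).
Proof.
intros. unfold clamp, Rmax, Rmin.
repeat destruct Rle_dec; unfold Rabs; repeat destruct Rcase_abs; lra.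
Qed.

Section Interval_calculus.

Variables (a b : R) (g dg : R -> R).
Hypothesis hab : a <= b.
Hypothesis hg : forall x, a <= x <= b -> deriv_within_ab a b g x (dg x).

Lemma continuity_clamp x : continuity_pt (fun t => g (clamp a b t)) x.
Proof.
apply continuity_pt_locally; intros eps.
destruct (deriv_within_ab_continuous a b g _ _ (hg _ (clamp_in a b x hab)) eps (cond_pos eps))
  as [delta [Hdelta Hcont]].
exists (mkposreal delta Hdelta); intros y Hy.
apply Hcont; [apply clamp_in; exact hab|].
pose proof (clamp_lipschitz a b x y hab). change (Rabs (y - x) < delta) in Hy. lra.
Qed.

Lemma MVT_within x y : a <= x -> x < y -> y <= b ->
  exists c, x < c < y /\ g y - g x = dg c * (y - x).
Proof.
intros Hx Hxy Hy.
set (G := fun t => g (clamp a b t)).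
assert (HG : forall c, x < c < y -> derivable_pt_lim G c (dg c)).
{ intros c Hc. apply is_derive_Reals.
  apply (is_derive_ext_loc g); [|apply is_derive_Reals, (deriv_within_ab_derivable a b); [lra | apply hg; lra]].
  apply (locally_interval _ c a b); simpl; [lra | lra|].
  intros t Ht1 Ht2. unfold G. rewrite clamp_id; lra. }
destruct (MVT G id x y (fun c Hc => exist _ (dg c) (HG c Hc)) (fun c _ => derivable_pt_id c)
  Hxy (fun c _ => continuity_clamp c) (fun c _ => derivable_continuous_pt _ _ (derivable_pt_id c)))
  as [c [Hc Hmvt]].
rewrite (derive_pt_eq_0 _ _ _ _ (derivable_pt_lim_id c)) in Hmvt. simpl in Hmvt.
exists c; split; [exact Hc|].
unfold G, id in Hmvt. rewrite !clamp_id in Hmvt by lra. lra.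
Qed.

Lemma MVT_within_abs x y : a <= x <= b -> a <= y <= b -> x <> y ->
  exists c, Rmin x y < c < Rmax x y /\ Rabs (g y - g x) = Rabs (dg c) * Rabs (y - x).
Proof.
intros Hx Hy Hxy.
destruct (Rlt_or_le x y) as [Hlt | Hle].
- destruct (MVT_within x y) as [c [Hc Hmvt]]; try lra.
  exists c. rewrite Rmin_left, Rmax_right by lra.
  split; [exact Hc|]. rewrite Hmvt, Rabs_mult. reflexivity.
- destruct (MVT_within y x) as [c [Hc Hmvt]]; try lra.
  exists c. rewrite Rmin_right, Rmax_left by lra. split; [exact Hc|].
  rewrite <- Rabs_Ropp, <- (Rabs_Ropp (y - x)).
  replace (- (g y - g x)) with (dg c * (x - y)) by lra.
  replace (- (y - x)) with (x - y) by ring. apply Rabs_mult.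
Qed.

Lemma max_within x y : a <= x <= y -> y <= b ->
  exists r, x <= r <= y /\ forall t, x <= t <= y -> g t <= g r.
Proof.
intros Hx Hy.
destruct (continuity_ab_maj (fun t => g (clamp a b t)) x y ltac:(lra)
  (fun c _ => continuity_clamp c)) as [r [Hmax Hr]].
exists r; split; [exact Hr|]. intros t Ht.
specialize (Hmax t Ht). rewrite !clamp_id in Hmax by lra. exact Hmax.
Qed.

Lemma min_within : exists r, a <= r <= b /\ forall t, a <= t <= b -> g r <= g t.
Proof.
destruct (continuity_ab_min (fun t => g (clamp a b t)) a b hab
  (fun c _ => continuity_clamp c)) as [r [Hmin Hr]].
exists r; split; [exact Hr|]. intros t Ht.
specialize (Hmin t Ht). rewrite !clamp_id in Hmin by lra. exact Hmin.
Qed.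

End Interval_calculus.

Lemma phi_p_0 p : phi_p p 0 = 0.
Proof. unfold phi_p. destruct Req_EM_T; lra. Qed.

Lemma Rabs_phi_p p x : x <> 0 -> Rabs (phi_p p x) = Rpower (Rabs x) (p - 1).
Proof.
intros Hx. unfold phi_p. destruct Req_EM_T; [lra|].
assert (Hax : 0 < Rabs x) by (apply Rabs_pos_lt; exact Hx).
rewrite Rabs_mult, (Rabs_pos_eq (Rpower _ _)) by (left; apply exp_pos).
rewrite <- (Rpower_1 (Rabs x)) at 2 by exact Hax.
rewrite <- Rpower_plus. f_equal. ring.
Qed.

Lemma Rpower_small A p : 0 <= A -> 0 < p -> exists H, 0 < H /\ A * Rpower H p < 1.
Proof.
intros HA Hp.
exists (Rpower (/ (A + 1)) (/ p)); split; [apply exp_pos|].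
rewrite Rpower_mult, Rinv_l, Rpower_1 by (try apply Rinv_0_lt_compat; lra).
apply (Rmult_lt_reg_r (A + 1)); [lra|].
rewrite Rmult_assoc, Rinv_l by lra. lra.
Qed.

Lemma Rpower_scaling_ge1 p A H M D : 1 < p -> 0 < H -> 0 < M -> M <= D * H ->
  Rpower D (p - 1) <= A * Rpower M (p - 1) * H -> 1 <= A * Rpower H p.
Proof.
intros Hp HH HM HMD HD.
assert (HMH : 0 < M / H) by (apply Rdiv_lt_0_compat; lra).
assert (HMH_D : M / H <= D).
{ apply (Rmult_le_reg_r H); [exact HH|]. unfold Rdiv. rewrite Rmult_assoc, Rinv_l; lra. }
assert (Hsplit : Rpower M (p - 1) = Rpower (M / H) (p - 1) * Rpower H (p - 1)).
{ rewrite Rpower_mult_distr by lra. f_equal. field. lra. }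
assert (HHp : Rpower H (p - 1) * H = Rpower H p).
{ rewrite <- (Rpower_1 H) at 2 by exact HH. rewrite <- Rpower_plus. f_equal. ring. }
assert (Hmono : Rpower (M / H) (p - 1) <= Rpower D (p - 1)) by (apply Rle_Rpower_l; lra).
assert (HMp : 0 < Rpower M (p - 1)) by apply exp_pos.
assert (HHp1 : 0 < Rpower H (p - 1)) by apply exp_pos.
assert (Rpower M (p - 1) <= A * Rpower H p * Rpower M (p - 1)).
{ rewrite <- HHp, Hsplit at 1.
  apply Rle_trans with (Rpower D (p - 1) * Rpower H (p - 1)); [apply Rmult_le_compat_r; lra|].
  apply Rle_trans with (A * Rpower M (p - 1) * H * Rpower H (p - 1)); [apply Rmult_le_compat_r; lra|].
  right; ring. }
apply (Rmult_le_reg_r (Rpower M (p - 1))); lra.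
Qed.

Lemma growth_bound_Rpower (f : R -> R) q l S : 0 <= q -> 0 < S ->
  (forall x, 0 < x -> continuity_pt f x) ->
  filterlim (fun s => f s / Rpower s q) (at_right 0) (locally l) ->
  exists K, 0 <= K /\ forall s, 0 < s <= S -> Rabs (f s) <= K * Rpower s q.
Proof.
intros Hq HS Hf Hlim.
destruct (proj1 (filterlim_locally _ _) Hlim (mkposreal 1 Rlt_0_1)) as [delta Hnear].
pose proof (cond_pos delta) as Hdelta.
set (d := Rmin (delta / 2) S).
assert (Hd : 0 < d) by (apply Rmin_pos; lra).
assert (Hd_delta : d <= delta / 2) by apply Rmin_l.
assert (Hd_S : d <= S) by apply Rmin_r.
destruct (continuity_ab_maj (fun s => Rabs (f s)) d S Hd_S) as [x1 [Hx1 _]].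
{ intros c Hc. apply (continuity_pt_comp f Rabs); [apply Hf; lra | apply Rcontinuity_abs]. }
assert (Hdq : 0 < Rpower d q) by apply exp_pos.
set (B := Rabs (f x1) / Rpower d q).
assert (HB : 0 <= B) by (apply Rdiv_le_0_compat; [apply Rabs_pos | lra]).
assert (HBd : B * Rpower d q = Rabs (f x1)) by (unfold B; field; lra).
pose proof (Rabs_pos l) as Hl.
exists (Rabs l + 1 + B); split; [lra|].
intros s Hs.
assert (Hsq : 0 < Rpower s q) by apply exp_pos.
destruct (Rlt_le_dec s d) as [Hsd | Hsd].
- assert (Hball : ball 0 delta s).
  { change (Rabs (s - 0) < delta). rewrite Rminus_0_r, Rabs_pos_eq; lra. }
  specialize (Hnear s Hball (proj1 Hs)). change (Rabs (f s / Rpower s q - l) < 1) in Hnear.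
  replace (f s) with (f s / Rpower s q * Rpower s q) by (field; lra).
  rewrite Rabs_mult, (Rabs_pos_eq (Rpower s q)) by lra.
  pose proof (Rabs_triang_inv (f s / Rpower s q) l).
  assert (0 <= B * Rpower s q) by (apply Rmult_le_pos; lra).
  apply Rle_trans with ((Rabs l + 1) * Rpower s q); [apply Rmult_le_compat_r; lra | nra].
- assert (Hfs : Rabs (f s) <= Rabs (f x1)) by exact (Hx1 s ltac:(lra)).
  assert (Rpower d q <= Rpower s q) by (apply Rle_Rpower_l; lra).
  assert (B * Rpower d q <= B * Rpower s q) by (apply Rmult_le_compat_l; lra).
  assert (0 <= (Rabs l + 1) * Rpower s q) by (apply Rmult_le_pos; lra).
  nra.
Qed.

Lemma Rabs_fhat_le f K q S s M : 0 <= K -> 0 <= q -> f 0 = 0 ->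
  (forall s, 0 < s <= S -> Rabs (f s) <= K * Rpower s q) ->
  s <= S -> s <= M -> 0 < M -> Rabs (fhat f s) <= K * Rpower M q.
Proof.
intros HK Hq Hf0 Hbound HsS HsM HM.
assert (HMq : 0 <= K * Rpower M q) by (apply Rmult_le_pos; [lra | left; apply exp_pos]).
unfold fhat. destruct (Rle_dec 0 s) as [Hs | Hs].
- destruct (Req_dec s 0) as [-> | Hs0]; [rewrite Hf0, Rabs_R0; exact HMq|].
  apply Rle_trans with (K * Rpower s q); [apply Hbound; lra|].
  apply Rmult_le_compat_l; [lra | apply Rle_Rpower_l; lra].
- rewrite Rabs_R0. exact HMq.
Qed.

Section Zero_propagation.

Variables (p K H R1 R2 m : R) (N : nat) (u du w dw : R -> R).
Hypotheses (hp : 1 < p) (hK : 0 <= K) (hH : 0 < H) (hR1 : 0 <= R1) (hR12 : R1 <= R2).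
Hypothesis hsmall : 2 ^ (N - 1) * K * Rpower H p < 1.
Hypothesis hu : forall x, R1 <= x <= R2 -> deriv_within_ab R1 R2 u x (du x).
Hypothesis hw : forall x, R1 <= x <= R2 -> deriv_within_ab R1 R2 w x (dw x).
Hypothesis hw_def : forall r, R1 <= r <= R2 -> w r = r ^ (N - 1) * phi_p p (du r).
Hypotheses (hdu1 : du R1 = 0) (hdu2 : du R2 = 0).
Hypothesis hm : forall r, R1 <= r <= R2 -> m <= u r.
(* [Rabs (dw r) <= r ^ (N - 1) * K * (u r - m) ^ (p - 1)], phrased through upper
   bounds [M > 0] because [Rpower 0 _ = 1]. *)
Hypothesis hdw : forall r M, R1 < r < R2 -> 0 < M -> u r - m <= M ->
  Rabs (dw r) <= r ^ (N - 1) * (K * Rpower M (p - 1)).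

Lemma w_vanishes_at_min z : R1 <= z <= R2 -> u z = m -> w z = 0.
Proof.
intros Hz Huz.
assert (Hduz : du z = 0).
{ destruct (Req_dec z R1) as [-> | Hz1]; [exact hdu1|].
  destruct (Req_dec z R2) as [-> | Hz2]; [exact hdu2|].
  apply (deriv_within_ab_min R1 R2 u z); [lra | apply hu; lra|].
  intros t Ht. rewrite Huz. apply hm, Ht. }
rewrite hw_def, Hduz, phi_p_0 by exact Hz. ring.
Qed.

Lemma gap_le_Rabs_du a c z rs : R1 <= a -> c <= R2 -> c - a <= H ->
  a <= z <= c -> a <= rs <= c -> u z = m -> m < u rs ->
  exists xi, a < xi < c /\ u rs - m <= Rabs (du xi) * H.
Proof.
intros Ha Hc HaH Hz Hrs Huz Hurs.
assert (Hzrs : z <> rs) by (intros <-; lra).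
destruct (MVT_within_abs R1 R2 u du hR12 hu z rs ltac:(lra) ltac:(lra) Hzrs)
  as [xi [Hxi Hmvt]].
exists xi; split.
- pose proof (Rmin_glb z rs a ltac:(lra) ltac:(lra)).
  pose proof (Rmax_lub z rs c ltac:(lra) ltac:(lra)). lra.
- rewrite Huz, Rabs_pos_eq in Hmvt by lra. rewrite Hmvt.
  apply Rmult_le_compat_l; [apply Rabs_pos|].
  unfold Rabs; destruct Rcase_abs; lra.
Qed.

(* The weight ratio [(eta / xi) ^ (N - 1)] stays below [2 ^ (N - 1)] when the zero
   [b] of [w] is the left end [a] (then [eta < xi]), or when [c <= 2 a]. *)
Lemma Rabs_w_le_Rabs_dw a c b xi : R1 <= a -> c <= R2 -> c - a <= H ->
  a <= b <= c -> w b = 0 -> (b = a \/ c <= 2 * a) -> a < xi < c ->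
  exists eta, a < eta < c /\ eta <= 2 * xi /\ Rabs (w xi) <= Rabs (dw eta) * H.
Proof.
intros Ha Hc HaH Hb Hwb Hbac Hxi.
destruct (Req_dec b xi) as [<- | Hbxi].
{ exists b. rewrite Hwb, Rabs_R0.
  repeat split; try lra. apply Rmult_le_pos; [apply Rabs_pos | lra]. }
destruct (MVT_within_abs R1 R2 w dw hR12 hw b xi ltac:(lra) ltac:(lra) Hbxi)
  as [eta [Heta Hmvt]].
pose proof (Rmin_glb b xi a ltac:(lra) ltac:(lra)).
pose proof (Rmax_lub b xi c ltac:(lra) ltac:(lra)).
exists eta; repeat split; try lra.
- destruct (Rle_lt_dec b xi) as [Hle | Hlt].
  + rewrite Rmax_right in Heta by exact Hle. lra.
  + destruct Hbac as [-> | Hc2a]; lra.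
- rewrite Hwb, Rminus_0_r in Hmvt. rewrite Hmvt.
  apply Rmult_le_compat_l; [apply Rabs_pos|].
  unfold Rabs; destruct Rcase_abs; lra.
Qed.

Lemma u_const_short a c b z : R1 <= a -> c <= R2 -> c - a <= H ->
  a <= z <= c -> u z = m -> a <= b <= c -> w b = 0 -> (b = a \/ c <= 2 * a) ->
  forall r, a <= r <= c -> u r = m.
Proof.
intros Ha Hc HaH Hz Huz Hb Hwb Hbac r Hr.
destruct (max_within R1 R2 u du hR12 hu a c) as [rs [Hrs Hmax]]; try lra.
destruct (Rle_lt_dec (u rs) m) as [Hle | Hlt].
{ specialize (Hmax r Hr). specialize (hm r ltac:(lra)). lra. }
exfalso.
set (M := u rs - m).
destruct (gap_le_Rabs_du a c z rs) as [xi [Hxi HM]]; try assumption.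
destruct (Rabs_w_le_Rabs_dw a c b xi) as [eta [Heta [Heta_xi Hw_xi]]]; try assumption.
assert (Hdu : du xi <> 0) by (intros E; rewrite E, Rabs_R0 in HM; unfold M in HM; lra).
assert (Hxi_pow : 0 < xi ^ (N - 1)) by (apply pow_lt; lra).
assert (Hweight : eta ^ (N - 1) <= 2 ^ (N - 1) * xi ^ (N - 1)).
{ rewrite <- Rpow_mult_distr. apply pow_incr. lra. }
assert (Hdw_eta : Rabs (dw eta) <= eta ^ (N - 1) * (K * Rpower M (p - 1))).
{ pose proof (Hmax eta ltac:(lra)). apply hdw; unfold M; lra. }
assert (HKM : 0 <= K * Rpower M (p - 1)) by (apply Rmult_le_pos; [lra | left; apply exp_pos]).
assert (Hcore : xi ^ (N - 1) * Rpower (Rabs (du xi)) (p - 1)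
             <= xi ^ (N - 1) * (2 ^ (N - 1) * K * Rpower M (p - 1) * H)).
{ assert (Hw_abs : Rabs (w xi) = xi ^ (N - 1) * Rpower (Rabs (du xi)) (p - 1)).
  { rewrite hw_def, Rabs_mult, Rabs_phi_p, (Rabs_pos_eq (xi ^ _)); lra. }
  rewrite <- Hw_abs.
  apply Rle_trans with (Rabs (dw eta) * H); [exact Hw_xi|].
  replace (xi ^ (N - 1) * (2 ^ (N - 1) * K * Rpower M (p - 1) * H))
    with (2 ^ (N - 1) * xi ^ (N - 1) * (K * Rpower M (p - 1)) * H) by ring.
  apply Rmult_le_compat_r; [lra|].
  apply Rle_trans with (eta ^ (N - 1) * (K * Rpower M (p - 1))); [exact Hdw_eta|].
  apply Rmult_le_compat_r; [exact HKM | exact Hweight]. }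
apply Rmult_le_reg_l in Hcore; [|exact Hxi_pow].
pose proof (Rpower_scaling_ge1 p (2 ^ (N - 1) * K) H M (Rabs (du xi)) hp hH
  ltac:(unfold M; lra) HM Hcore).
lra.
Qed.

Lemma u_const_right z : R1 <= z <= R2 -> u z = m ->
  forall r, z <= r <= Rmin (z + H) R2 -> u r = m.
Proof.
intros Hz Huz.
pose proof (Rmin_l (z + H) R2). pose proof (Rmin_r (z + H) R2).
pose proof (Rmin_glb (z + H) R2 z ltac:(lra) ltac:(lra)).
apply (u_const_short z (Rmin (z + H) R2) z z); try lra.
apply w_vanishes_at_min; assumption.
Qed.

Lemma u_const_left z : R1 <= z <= R2 -> u z = m ->
  forall r, Rmax (z - H / 2) R1 <= r <= z -> u r = m.
Proof.
intros Hz Huz r Hr.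
pose proof (Rmax_l (z - H / 2) R1). pose proof (Rmax_r (z - H / 2) R1).
destruct (Rle_lt_dec (z - R1) H) as [Hnear | Hfar].
- apply (u_const_short R1 z R1 z); try lra.
  rewrite hw_def, hdu1, phi_p_0 by lra. ring.
- apply (u_const_short (z - H / 2) z z z); try lra.
  apply w_vanishes_at_min; assumption.
Qed.

Lemma u_const_near r0 n : R1 <= r0 <= R2 -> u r0 = m ->
  forall r, R1 <= r <= R2 -> Rabs (r - r0) <= INR n * (H / 2) -> u r = m.
Proof.
intros Hr0 Hur0. induction n as [| n IH]; intros r Hr Hdist.
- simpl in Hdist. rewrite Rmult_0_l in Hdist.
  assert (r = r0) as -> by (pose proof (Rabs_pos (r - r0)); apply Rminus_diag_uniq, Rabs_eq_0; lra).
  exact Hur0.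
- rewrite S_INR in Hdist.
  destruct (Rle_dec (Rabs (r - r0)) (INR n * (H / 2))) as [Hle | Hgt]; [apply IH; assumption|].
  pose proof (pos_INR n).
  destruct (Rle_lt_dec r r0) as [Hleft | Hright].
  + rewrite Rabs_left1 in Hdist, Hgt by lra.
    set (z := r0 - INR n * (H / 2)).
    assert (Hz : R1 <= z <= R2) by (unfold z; split; nra).
    apply (u_const_left z Hz).
    * apply IH; [exact Hz|]. unfold z. rewrite Rabs_left1; nra.
    * unfold z in *; split; [apply Rmax_lub|]; lra.
  + rewrite Rabs_pos_eq in Hdist, Hgt by lra.
    set (z := r0 + INR n * (H / 2)).
    assert (Hz : R1 <= z <= R2) by (unfold z; split; nra).
    apply (u_const_right z Hz).
    * apply IH; [exact Hz|]. unfold z. rewrite Rabs_pos_eq; nra.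
    * unfold z in *; split; [lra | apply Rmin_glb; lra].
Qed.

Lemma u_const r0 : R1 <= r0 <= R2 -> u r0 = m -> forall r, R1 <= r <= R2 -> u r = m.
Proof.
intros Hr0 Hur0 r Hr.
destruct (INR_unbounded ((R2 - R1) / (H / 2))) as [n Hn].
apply (u_const_near r0 n Hr0 Hur0 r Hr).
assert (Hcover : R2 - R1 <= INR n * (H / 2)).
{ apply (Rmult_lt_compat_r (H / 2)) in Hn; [|lra].
  unfold Rdiv at 1 in Hn. rewrite Rmult_assoc, Rinv_l in Hn by lra. lra. }
unfold Rabs; destruct Rcase_abs; lra.
Qed.

End Zero_propagation.

Theorem lemma2p1
  (p : R) (N : nat) (R1 R2 : R) (f : R -> R)
  (hp : 1 < p) (hN : (1 <= N)%nat) (hR1 : 0 <= R1) (hR12 : R1 < R2)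
  (* (f_reg) *)
  (hfreg : f_reg f)
  (* (f_eq) *)
  (hf0 : f 0 = 0) (hf1 : f 1 = 0)
  (hfneg : forall s, 0 < s < 1 -> f s < 0)
  (hfpos : forall s, 1 < s -> 0 < f s)
  (* (f_0) *)
  (hfC0 : exists C0 : R, 0 <= C0 /\
      filterlim (fun s => f s / Rpower s (p - 1)) (at_right 0) (locally (- C0)))
  (* (f_1) *)
  (hfC1 : exists C1 : Rbar, Rbar_le (Finite 0) C1 /\
      is_lim (fun s => f s / phi_p p (s - 1)) 1 C1)
  (* u is a solution: u, w := r^(N-1) phi_p(u') in C^1([R1,R2]) *)
  (u du dw : R -> R)
  (hu : C1_on R1 R2 u du)
  (hw : C1_on R1 R2 (fun r => r ^ (N - 1) * phi_p p (du r)) dw)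
  (heq : forall r, R1 < r < R2 -> - dw r = r ^ (N - 1) * fhat f (u r))
  (hbc1 : du R1 = 0) (hbc2 : du R2 = 0) :
  (exists C : R, 0 <= C /\ forall r, R1 <= r <= R2 -> u r = - C) \/
  (forall r, R1 <= r <= R2 -> 0 < u r).
Proof.
pose proof (fun x Hx => proj1 (hu x Hx)) as hu'.
pose proof (fun x Hx => proj1 (hw x Hx)) as hw'.
destruct (min_within R1 R2 u du ltac:(lra) hu') as [r0 [Hr0 Hmin]].
destruct (Rlt_or_le 0 (u r0)) as [Hpos | Hm].
{ right. intros r Hr. specialize (Hmin r Hr). lra. }
left. exists (- u r0). split; [lra|]. rewrite Ropp_involutive.
destruct (max_within R1 R2 u du ltac:(lra) hu' R1 R2) as [r1 [_ Hmax]]; try lra.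
destruct hfC0 as [C0 [_ Hlim]].
destruct (growth_bound_Rpower f (p - 1) (- C0) (Rabs (u r1) + 1)) as [K [HK Hgrowth]];
  try (lra || assumption).
{ pose proof (Rabs_pos (u r1)); lra. }
{ intros x Hx. apply continuity_pt_filterlim.
  exact (@ex_derive_continuous R_AbsRing R_NormedModule f x (proj1 (proj2 hfreg x Hx))). }
destruct (Rpower_small (2 ^ (N - 1) * K) p) as [H [HH Hsmall]];
  [apply Rmult_le_pos; [apply pow_le|]; lra | lra |].
assert (Hdw : forall r M, R1 < r < R2 -> 0 < M -> u r - u r0 <= M ->
  Rabs (dw r) <= r ^ (N - 1) * (K * Rpower M (p - 1))).
{ intros r M Hr HM HuM.
  rewrite <- Rabs_Ropp, heq, Rabs_mult, (Rabs_pos_eq (r ^ _)) by (try apply pow_le; lra).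
  apply Rmult_le_compat_l; [apply pow_le; lra|].
  apply (Rabs_fhat_le f K (p - 1) (Rabs (u r1) + 1)); try (lra || assumption).
  specialize (Hmax r ltac:(lra)). pose proof (Rle_abs (u r1)). lra. }
exact (u_const p K H R1 R2 (u r0) N u du _ dw hp HK HH hR1 ltac:(lra) Hsmall hu' hw'
  (fun r _ => eq_refl) hbc1 hbc2 Hmin Hdw r0 Hr0 eq_refl).
Qed.
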